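(* Let $p\geq 5$ be a prime and let $r$ be an integer with $1\leq r\leq p-1$ that is a quadratic nonresidue modulo $p$. Then for all $n\geq 0$, $d_{p-1}(pn+r)\equiv 0\pmod p$.
   Context: For each integer $k\geq 1$, the numbers $d_k(n)$ are defined by $\sum_{n\geq 0} d_k(n)q^n = \frac{f_2^k}{f_1^{3k+1}}$, where $f_r = \prod_{i\geq 1}(1-q^{ri})$. *)

From mathcomp Require Import all_boot all_order all_algebra.
Set Implicit Arguments. Unset Strict Implicit. Unset Printing Implicit Defensive.
Import GRing.Theory Num.Theory.
Local Open Scope ring_scope.

(* Truncations (modulo q^(N+1)) of the q-series involved; all coefficients of
   index <= N are exact. *)

Definition fr (r N : nat) : {poly int} :=
  \prod_(1 <= i < N.+1) (1 - 'X^(r * i)).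

(* 1/f_1 = prod_{i>=1} 1/(1 - q^i) = prod_{i>=1} sum_{j>=0} q^(i j),
   with i <= N and j <= N (exact modulo q^(N+1)). *)
Definition f1inv (N : nat) : {poly int} :=
  \prod_(1 <= i < N.+1) \sum_(j < N.+1) 'X^(i * j).

(* d_k(n) = [q^n] f_2^k / f_1^(3k+1). *)
Definition d (k n : nat) : int :=
  ((fr 2 n) ^+ k * (f1inv n) ^+ (3 * k + 1))`_n.

Definition qnr (p r : nat) : Prop :=
  ~ (exists x : nat, (x ^ 2 = r %[mod p])%N).

From mathcomp Require Import all_boot all_order all_algebra.
From mathcomp Require Import ring zify.
Set Implicit Arguments. Unset Strict Implicit. Unset Printing Implicit Defensive.
Import GRing.Theory.
Local Open Scope ring_scope.

(* By Gauss's identity f_1^2 / f_2 = theta := sum_j (-1)^j q^(j^2), we have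
   f_2^(p-1) / f_1^(3p-2) = (f_2 / f_1^3)^p * theta. Modulo p the p-th power
   is a series in q^p, so the coefficient of q^(pn+r) is a combination of
   coefficients of theta at exponents congruent to r mod p; these are not
   squares, so the coefficients vanish. Gauss's identity is derived from the
   q-binomial theorem at q^2, which gives the finite form
   sum_k (-1)^(k-n) q^((k-n)^2) [2n, k]_(q^2) = (q; q^2)_n^2, and then letting
   n grow with the precision of the truncation. *)

Notation "a = b %[modX n ]" := (take_poly n a = take_poly n b)
  (at level 70, b at next level, format "a  =  b  %[modX  n ]") : ring_scope.

Section TruncatedPolynomials.
Variable R : comNzRingType.
Implicit Types a b c e : {poly R}.

Lemma take_polyMl n a b : take_poly n a * b = a * b %[modX n].
Proof.
rewrite -{2}(poly_take_drop n a) mulrDl take_polyD mulrAC take_polyMXn_0.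
by rewrite addr0.
Qed.

Lemma take_polyMr n a b : a * take_poly n b = a * b %[modX n].
Proof. by rewrite ![a * _]mulrC take_polyMl. Qed.

Lemma modX_mul n a b c e :
  a = b %[modX n] -> c = e %[modX n] -> a * c = b * e %[modX n].
Proof.
by move=> ab ce; rewrite -take_polyMl ab take_polyMl -take_polyMr ce take_polyMr.
Qed.

Lemma modX_exp n a b k : a = b %[modX n] -> a ^+ k = b ^+ k %[modX n].
Proof. by move=> ab; elim: k => // k ih; rewrite !exprS; apply: modX_mul. Qed.

Lemma modX_prod n (I : Type) (s : seq I) (P : pred I) (F G : I -> {poly R}) :
  (forall i, P i -> F i = G i %[modX n]) ->
  \prod_(i <- s | P i) F i = \prod_(i <- s | P i) G i %[modX n].
Proof.
by move=> FG; apply: (big_ind2 (fun a b => a = b %[modX n])) => // *; apply: modX_mul.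
Qed.

Lemma modX_Xn_mul n k a : (n <= k)%N -> 'X^k * a = 0 %[modX n].
Proof. by move=> nk; rewrite mulrC take_polyMXn take_poly0r (eqP nk) take_poly0l mul0r. Qed.

Lemma modX_mul1BXn n k a : (n <= k)%N -> a * (1 - 'X^k) = a %[modX n].
Proof.
move=> nk; rewrite mulrBr mulr1 take_polyD linearN /= mulrC modX_Xn_mul //.
by rewrite take_poly0r subr0.
Qed.
End TruncatedPolynomials.

Section QBinomial.
Variables (R : comNzRingType) (q : R).

Fixpoint qbinom (m k : nat) : R :=
  match m, k with
  | _, 0 => 1
  | 0, _.+1 => 0
  | m'.+1, k'.+1 => qbinom m' k' + q ^+ k'.+1 * qbinom m' k'.+1
  end.

Lemma qbinom0 m : qbinom m 0 = 1. Proof. by case: m. Qed.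

Lemma qbinom_small m k : (m < k)%N -> qbinom m k = 0.
Proof. by elim: m k => [|m ih] [|k] //= mk; rewrite !ih ?mulr0 ?addr0 // ltnW. Qed.

Lemma qbinomnn m : qbinom m m = 1.
Proof. by elim: m => //= m ->; rewrite qbinom_small // mulr0 addr0. Qed.

Lemma qbinomial_theorem m (w z : R) :
  \prod_(i < m) (w + z * q ^+ i) =
  \sum_(0 <= k < m.+1) q ^+ 'C(k, 2) * qbinom m k * z ^+ k * w ^+ (m - k).
Proof.
elim: m w z => [|m ih] w z; first by rewrite big_ord0 big_nat1 !mulr1.
rewrite big_ord_recl expr0 mulr1.
under eq_bigr => i _ do rewrite lift0 exprS mulrA.
pose c k := q ^+ 'C(k, 2) * qbinom m k * (z * q) ^+ k * w ^+ (m - k).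
have pascal k : q ^+ 'C(k.+1, 2) * qbinom m.+1 k.+1 * z ^+ k.+1 * w ^+ (m.+1 - k.+1)
    = z * c k + w * c k.+1.
  rewrite /c /= binS bin1 subSS exprD !exprMn !exprS.
  have [km|mk] := ltnP k m; last by rewrite (@qbinom_small m k.+1) ?ltnS //; ring.
  by rewrite -(subnSK km) exprS; ring.
rewrite ih mulrDl !big_distrr [RHS]big_nat_recl //.
under [X in _ = _ + X]eq_bigr => k _ do rewrite pascal.
rewrite big_split /= addrCA addrC; congr (_ + _).
rewrite big_nat_recl // big_nat_recr //= {2}/c (@qbinom_small m m.+1) // mulr0 !mul0r.
by rewrite mulr0 addr0 qbinom0 !subn0 !mulr1 !expr0 !mul1r exprS.
Qed.

Definition qpoch (j : nat) : R := \prod_(i < j) (1 - q ^+ i.+1).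

Lemma qpochS j : qpoch j.+1 = qpoch j * (1 - q ^+ j.+1).
Proof. by rewrite /qpoch big_ord_recr. Qed.

Lemma qpoch0 : qpoch 0 = 1. Proof. exact: big_ord0. Qed.

Lemma qbinom_qpoch m k : (k <= m)%N -> qbinom m k * qpoch k * qpoch (m - k) = qpoch m.
Proof.
elim: m k => [|m ih] [|k] //; rewrite ?qbinom0 ?qpoch0 ?mul1r ?mulr1 ?subn0 //.
rewrite ltnS leq_eqVlt => /predU1P[->|km]; first by rewrite qbinomnn subnn qpoch0 mul1r mulr1.
have ih0 := ih k (ltnW km); have ih1 := ih k.+1 km.
set j := (m - k.+1)%N in ih1.
have mkE : (m - k = j.+1)%N by rewrite /j subnSK.
have mE : m.+1 = (k.+1 + j.+1)%N by lia.
rewrite subSS mkE in ih0 *.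
transitivity (qbinom m k * qpoch k * qpoch j.+1 * (1 - q ^+ k.+1)
    + q ^+ k.+1 * (qbinom m k.+1 * qpoch k.+1 * qpoch j) * (1 - q ^+ j.+1)).
  by rewrite /= !qpochS; ring.
by rewrite ih0 ih1 qpochS mE exprD; ring.
Qed.
End QBinomial.

Lemma qpoch_modX {R : comNzRingType} s N j : (0 < s)%N -> (N <= j)%N ->
  qpoch ('X^s : {poly R}) j = qpoch 'X^s N %[modX N.+1].
Proof.
move=> s_gt0; elim: j => [|j ih]; first by rewrite leqn0 => /eqP->.
rewrite leq_eqVlt => /predU1P[->//|lt_Nj].
by rewrite qpochS -exprM modX_mul1BXn ?ih // (leq_trans lt_Nj) ?leq_pmull.
Qed.

Lemma double_bin2 n : (2 * 'C(n, 2) = n * n.-1)%N.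
Proof. by elim: n => // n ih; rewrite binS bin1 mulnDr ih; case: n {ih} => //= n; lia. Qed.

Lemma theta_exponent n k : (k <= n + n)%N ->
  (2 * 'C(k, 2) + (n + n).-1 * (n + n - k) = n * n.-1 + (n + n).-1 * n + `|k - n| ^ 2)%N.
Proof.
move=> kn; rewrite double_bin2.
(* sqrn_dist relates |k - n|^2 to k^2 + n^2, so nia can treat it as an atom *)
have := sqrn_dist k n; move: (`|k - n| ^ 2)%N => D.
case: n kn => [|n]; first by rewrite leqn0 => /eqP->; lia.
by rewrite addSn /=; case: k => [|k] /=; nia.
Qed.

Section Theta.
Context {R : comNzRingType}.

Definition qpoch_odd (n : nat) : {poly R} := \prod_(i < n) (1 - 'X^(2 * i + 1)).

(* sum_(|j| <= n) (-1)^j X^(j^2), indexed by k = j + n *)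
Definition theta (n : nat) : {poly R} :=
  \sum_(0 <= k < (n + n).+1) (-1) ^+ (k + n) * 'X^(`|k - n| ^ 2).

Lemma qpoch_double n : qpoch ('X : {poly R}) (n + n) = qpoch_odd n * qpoch ('X^2) n.
Proof.
elim: n => [|n ih]; first by rewrite !qpoch0 /qpoch_odd big_ord0 mulr1.
rewrite addSn addnS !qpochS ih /qpoch_odd big_ord_recr /= -!exprM.
have -> : (2 * n + 1 = (n + n).+1)%N by lia.
have -> : (2 * n.+1 = (n + n).+2)%N by lia.
ring.
Qed.

Lemma prod_XsubX n :
  \prod_(i < n + n) ('X^((n + n).-1) - 'X^(2 * i)) =
  (-1) ^+ n * 'X^(n * n.-1 + (n + n).-1 * n) * qpoch_odd n ^+ 2 :> {poly R}.
Proof.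
rewrite big_split_ord /=.
have low : \prod_(i < n) ('X^((n + n).-1) - 'X^(2 * lshift n i)) =
    (-1) ^+ n * 'X^(n * n.-1) * qpoch_odd n :> {poly R}.
  transitivity (\prod_(i < n) (-1 * 'X^(2 * i) * (1 - 'X^(2 * (n.-1 - i) + 1))) : {poly R}).
    apply: eq_bigr => i _; have lt_i_n := ltn_ord i.
    rewrite mulrBr mulr1 -mulrA -exprD /=.
    have -> : (2 * i + (2 * (n.-1 - i) + 1) = (n + n).-1)%N by lia.
    ring.
  rewrite !big_split /= prodr_const card_ord prodrXr -big_distrr /=.
  rewrite -(big_mkord xpredT (fun i => i)) bin2_sum double_bin2; congr (_ * _).
  rewrite /qpoch_odd [RHS](reindex_inj rev_ord_inj); apply: eq_bigr => i _ /=.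
  by have lt_i_n := ltn_ord i; congr (1 - 'X^(_)); lia.
have high : \prod_(i < n) ('X^((n + n).-1) - 'X^(2 * rshift n i)) =
    'X^((n + n).-1 * n) * qpoch_odd n :> {poly R}.
  transitivity (\prod_(i < n) ('X^((n + n).-1) * (1 - 'X^(2 * i + 1))) : {poly R}).
    apply: eq_bigr => i _; rewrite mulrBr mulr1 -exprD /=.
    by have -> : ((n + n).-1 + (2 * i + 1) = 2 * (n + i))%N by have := ltn_ord i; lia.
  by rewrite big_split /= prodr_const card_ord -exprM.
by rewrite low high exprD; ring.
Qed.

Lemma sum_qbinom_theta n :
  \sum_(0 <= k < (n + n).+1) (-1) ^+ (k + n) * 'X^(`|k - n| ^ 2) * qbinom ('X^2) (n + n) k =
  qpoch_odd n ^+ 2.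
Proof.
(* the q-binomial theorem at q := X^2, w := X^(2n-1), z := -1, up to (-1)^n X^c *)
set c := (n * n.-1 + (n + n).-1 * n)%N.
have reg : GRing.lreg ((-1) ^+ n * 'X^c : {poly R}).
  apply: lregM; [exact: lreg_sign | apply: lreg_lead; rewrite lead_coefXn; exact: lreg1].
apply: reg; rewrite -prod_XsubX.
have := qbinomial_theorem ('X^2 : {poly R}) (n + n) ('X^((n + n).-1)) (-1).
under eq_bigr => i _ do rewrite mulN1r -exprM.
move=> ->; rewrite big_distrr; apply: eq_big_nat => k /andP[_ le_k].
rewrite /= -!exprM.
transitivity (((-1) ^+ n) ^+ 2 * (-1) ^+ k * ('X^c * 'X^(`|k - n| ^ 2)) *
              qbinom ('X^2) (n + n) k : {poly R}); first by rewrite exprD; ring.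
by rewrite sqrr_sign mul1r -exprD -theta_exponent // exprD; ring.
Qed.

Lemma qpoch_odd_modX N n : (N + N <= n)%N ->
  qpoch_odd n ^+ 2 * qpoch ('X^2) N ^+ 2 = theta n * qpoch ('X^2) N %[modX N.+1].
Proof.
move=> le_Nn; rewrite -sum_qbinom_theta /theta !mulr_suml !take_poly_sum.
apply: eq_big_nat => k /andP[_ le_k]; rewrite ltnS in le_k.
have [large|small] := leqP N.+1 (`|k - n| ^ 2).
  by rewrite [_ * 'X^_]mulrC -!mulrA !modX_Xn_mul.
have le_dist : (`|k - n| <= N)%N by move: small; move: (`|k - n|)%N => d; nia.
rewrite -!mulrA; apply: modX_mul => //; apply: modX_mul => //.
have [le_Nk le_Nnk] : (N <= k)%N /\ (N <= n + n - k)%N by lia.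
have trunc_k := qpoch_modX (R := R) (s := 2) isT le_Nk.
have trunc_nk := qpoch_modX (R := R) (s := 2) isT le_Nnk.
rewrite [qpoch _ N ^+ 2]expr2 mulrA -(modX_mul (modX_mul (erefl _) trunc_k) trunc_nk).
by rewrite qbinom_qpoch // qpoch_modX //; lia.
Qed.

Lemma gauss_modX N :
  qpoch ('X : {poly R}) N ^+ 2 = qpoch ('X^2) N * theta (N + N) %[modX N.+1].
Proof.
have f1E : qpoch 'X N = qpoch_odd (N + N) * qpoch ('X^2) N %[modX N.+1].
  have le_N : (N <= (N + N) + (N + N))%N by lia.
  rewrite -(qpoch_modX (s := 1) isT le_N) qpoch_double; apply: modX_mul => //.
  exact: (qpoch_modX (s := 2) isT (leq_addl _ _)).
by rewrite (modX_exp 2 f1E) exprMn qpoch_odd_modX // mulrC.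
Qed.

Lemma coef_theta_nonsquare n j : (forall s, j <> (s ^ 2)%N) -> (theta n)`_j = 0.
Proof.
move=> nonsq; rewrite /theta coef_sum big1 // => k _.
have -> : (-1) ^+ (k + n) = ((-1) ^+ (k + n))%:P :> {poly R} by rewrite polyC_exp polyCN.
rewrite coefCM coefXn.
by case: eqP => [/nonsq|]; rewrite ?mulr0.
Qed.
End Theta.

Lemma fr_qpoch r N : fr r N = qpoch 'X^r N.
Proof. by rewrite /fr /qpoch big_add1 big_mkord; apply: eq_bigr => i _; rewrite exprM. Qed.

Lemma f1inv_modX N : f1inv N * fr 1 N = 1 %[modX N.+1].
Proof.
rewrite /f1inv /fr -big_split big_add1 /=.
transitivity (take_poly N.+1 (\prod_(0 <= i < N) 1 : {poly int})); last by rewrite big1_eq.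
apply: modX_prod => i _.
have geom : (\sum_(j < N.+1) 'X^(i.+1 * j)) * (1 - 'X^(1 * i.+1)) = 1 - 'X^(i.+1 * N.+1) :> {poly int}.
  under eq_bigr => j _ do rewrite exprM.
  by rewrite mul1n exprM -[RHS]opprB subrX1 mulrC -mulNr opprB.
by rewrite geom -[1 - _]mul1r modX_mul1BXn // leq_pmull.
Qed.

(* f_2^k / f_1^(3k+1) = (f_2 / f_1^3)^(k+1) * f_1^2 / f_2 *)
Lemma d_coef k N : d k N = ((fr 2 N * f1inv N ^+ 3) ^+ k.+1 * theta (N + N))`_N.
Proof.
have coef_take (a : {poly int}) : a`_N = (take_poly N.+1 a)`_N by rewrite coef_take_poly ltnSn.
rewrite /d [LHS]coef_take [RHS]coef_take; congr (_`_N).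
set A := fr 2 N; set B := f1inv N; set C := fr 1 N.
have BC2 : (B * C) ^+ 2 = 1 %[modX N.+1] by rewrite (modX_exp 2 (f1inv_modX N)) expr1n.
have C2 : C ^+ 2 = A * theta (N + N) %[modX N.+1] by rewrite /A /C !fr_qpoch gauss_modX.
rewrite -[A ^+ k * _]mulr1 -(modX_mul (erefl _) BC2).
have -> : A ^+ k * B ^+ (3 * k + 1) * (B * C) ^+ 2 = A ^+ k * B ^+ (3 * k.+1) * C ^+ 2.
  by rewrite (_ : 3 * k.+1 = 3 * k + 1 + 2)%N ?exprD ?exprMn; [ring | lia].
rewrite (modX_mul (erefl _) C2) exprMn -exprM exprSr; congr take_poly; ring.
Qed.

Lemma coef_exprp_pchar (R : comNzRingType) p (F : {poly R}) i :
  p \in [pchar R] -> ~~ (p %| i)%N -> (F ^+ p)`_i = 0.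
Proof.
move=> pcharR p_ndvd_i; have pchar_poly_p : p \in [pchar {poly R}] by rewrite pchar_poly.
rewrite -(pFrobenius_autE pchar_poly_p) -[F]coefK poly_def rmorph_sum coef_sum.
apply: big1 => j _; rewrite /= pFrobenius_autE exprZn -exprM coefZ coefXn.
by case: eqP => [iE|_]; [rewrite iE dvdn_mull in p_ndvd_i | rewrite mulr0].
Qed.

Lemma dvdz_coef_exprp_mul p (G T : {poly int}) m : prime p ->
  (forall j, (j <= m)%N -> j = m %[mod p] -> T`_j = 0) ->
  (p%:Z %| (G ^+ p * T)`_m)%Z.
Proof.
move=> p_prime T0; rewrite (dvdz_pcharf (pchar_Fp p_prime)) -(coef_map intr).
rewrite rmorphM rmorphXn coefM; apply/eqP/big1 => -[i /= lt_im] _.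
have [p_dvd_i|p_ndvd_i] := boolP (p %| i)%N; last first.
  by rewrite coef_exprp_pchar ?mul0r // pchar_Fp.
rewrite coef_map T0 ?mulr0 ?leq_subr //.
have mE : m = (i %/ p * p + (m - i))%N by rewrite divnK // addnC subnK // -ltnS.
by rewrite {2}mE modnMDl.
Qed.

Theorem theorem4p3 (p r : nat) :
  prime p -> (5 <= p)%N -> (1 <= r <= p - 1)%N -> qnr p r ->
  forall n : nat, ((p%:Z) %| d (p - 1) (p * n + r))%Z.
Proof.
move=> p_prime _ _ r_qnr n.
rewrite d_coef subn1 prednK ?prime_gt0 //.
apply: dvdz_coef_exprp_mul => // j _ jE.
apply: coef_theta_nonsquare => s jE'; apply: r_qnr; exists s.
by rewrite -jE' jE mulnC modnMDl.
Qed.
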